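(* An element $f\in C(X)_\mathcal{P}$ is clean (i.e. $f=u+e$ with $u$ a unit and $e$ an idempotent of $C(X)_\mathcal{P}$) if and only if there exists a $\tau\mathcal{P}$-clopen subset $U$ of $X$ such that $f^{-1}(\{1\})\subseteq U\subseteq X\setminus Z_\mathcal{P}(f)$.
   Context: Let $(X,\tau)$ be a $T_1$ topological space and $\mathcal{P}$ an ideal of closed subsets of $X$ (a nonempty family of closed sets closed under finite unions and under taking closed subsets). For $f\colon X\to\mathbb{R}$, $D_f$ denotes the set of points of discontinuity of $f$, and $C(X)_\mathcal{P}=\{f\colon X\to\mathbb{R} : \overline{D_f}\in\mathcal{P}\}$, a commutative ring with unity under pointwise operations. For $f\in C(X)_\mathcal{P}$, $Z_\mathcal{P}(f)=\{x: f(x)=0\}$. A set $U\subseteq X$ is $\tau\mathcal{P}$-clopen if $U=Z_\mathcal{P}(f)=X\setminus Z_\mathcal{P}(g)$ for some $f,g\in C(X)_\mathcal{P}$. *)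

From HB Require Import structures.
From mathcomp Require Import all_boot all_order all_algebra.
From mathcomp Require Import all_classical all_reals all_analysis.
Set Implicit Arguments. Unset Strict Implicit. Unset Printing Implicit Defensive.
Import Order.TTheory GRing.Theory Num.Theory.
Import numFieldNormedType.Exports.
Local Open Scope classical_set_scope.
Local Open Scope ring_scope.

Definition closed_ideal {X : topologicalType} (P : set (set X)) : Prop :=
  [/\ P !=set0,
      (forall A, P A -> closed A),
      (forall A B, P A -> P B -> P (A `|` B)) &
      (forall A B, P A -> closed B -> B `<=` A -> P B)].

Definition discont {X : topologicalType} {R : realType} (f : X -> R) : set X :=
  [set x : X | ~ {for x, continuous (f : X -> R)}].

Definition CP {X : topologicalType} {R : realType} (P : set (set X)) (f : X -> R) : Prop :=
  P (closure (discont f)).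

Definition ZP {X : topologicalType} {R : realType} (f : X -> R) : set X :=
  [set x | f x = 0].

Definition CP_unit {X : topologicalType} {R : realType} (P : set (set X)) (u : X -> R) : Prop :=
  CP P u /\ exists v : X -> R, CP P v /\ (forall x, u x * v x = 1).

Definition CP_idempotent {X : topologicalType} {R : realType} (P : set (set X)) (e : X -> R) : Prop :=
  CP P e /\ (forall x, e x * e x = e x).

Definition CP_clean {X : topologicalType} {R : realType} (P : set (set X)) (f : X -> R) : Prop :=
  exists u e : X -> R, [/\ CP_unit P u, CP_idempotent P e & (forall x, f x = u x + e x)].

Definition tauP_clopen {X : topologicalType} {R : realType} (P : set (set X)) (U : set X) : Prop :=
  exists f g : X -> R, [/\ CP P f, CP P g, U = ZP f & U = ~` ZP g].

From mathcomp Require Import all_boot all_order all_algebra.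
From mathcomp Require Import all_classical all_reals all_analysis.
Import Order.TTheory GRing.Theory Num.Theory.
Import numFieldNormedType.Exports.
Local Open Scope classical_set_scope.
Local Open Scope ring_scope.

(* If f = u + e is clean, then e is a 0/1-valued function, so U := Z(e) is
   tauP-clopen (U = X \ Z(1 - e)); on U we have f = u, a unit, and off U we
   have f - 1 = u, so f^-1(1) lies inside U.  Conversely, given U, the
   indicator e of X \ U lies in C(X)_P because at every continuity point of
   the two functions defining U, either U or its complement is a
   neighbourhood; then u := f - e vanishes nowhere and is a unit. *)

Lemma idempotent_01 {R : idomainType} {a : R} : a * a = a -> a = 0 \/ a = 1.
Proof.
move=> aa; have /eqP : a * (a - 1) = 0 by rewrite mulrBr mulr1 aa subrr.
by rewrite mulf_eq0 subr_eq0 => /orP[] /eqP; [left|right].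
Qed.

Lemma nbhs_nonzero (R : realType) (X : topologicalType) (g : X -> R) (x : X) :
  {for x, continuous g} -> g x != 0 -> nbhs x (~` ZP g).
Proof. by move=> cg /(cvgr_neq0 _ cg); apply: filterS => y /eqP. Qed.

Lemma indic_continuous_nbhs (R : realType) (X : topologicalType) (A : set X) (x : X) :
  nbhs x A \/ nbhs x (~` A) -> {for x, continuous (\1_A : X -> R)}.
Proof.
move=> [nA|nA].
- apply: (near_cst_continuous (1 : R)); apply: filterS nA => y Ay.
  by rewrite indicE mem_set.
- apply: (near_cst_continuous (0 : R)); apply: filterS nA => y Ay.
  by rewrite indicE memNset.
Qed.

Section DiscontinuityIdeal.
Context {R : realType} {X : topologicalType} {P : set (set X)}.
Hypothesis hP : closed_ideal P.

Lemma CP_discont_sub {f g h : X -> R} :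
  CP P f -> CP P g -> discont h `<=` discont f `|` discont g -> CP P h.
Proof.
case: hP => _ _ hU hS Pf Pg hfg; rewrite /CP.
apply: (hS _ _ (hU _ _ Pf Pg)); first exact: closed_closure.
rewrite [X in _ `<=` X](closure_id _).1; last by apply: closedU; exact: closed_closure.
by apply: closureS => x /hfg [] ?; [left|right]; exact: subset_closure.
Qed.

Lemma CP_cst (c : R) : CP P (cst c).
Proof.
case: hP => -[A PA] _ _ hS; rewrite /CP.
have -> : discont (cst c : X -> R) = set0.
  by apply/seteqP; split => // x /=; apply; exact: cst_continuous.
by rewrite closure0; apply: (hS A) => //; exact: closed0.
Qed.

Lemma CP_sub {f g : X -> R} : CP P f -> CP P g -> CP P (fun x => f x - g x).
Proof.
move=> Pf Pg; apply: (CP_discont_sub Pf Pg) => x fgx.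
apply: contrapT => /not_orP[/contrapT cf /contrapT cg]; apply: fgx.
exact: cvgB.
Qed.

Lemma CP_inv {u : X -> R} :
  (forall x, u x != 0) -> CP P u -> CP P (fun x => (u x)^-1).
Proof.
move=> u0 Pu; apply: (CP_discont_sub Pu Pu) => x ux.
by left; apply: contra_not ux; exact: cvgV.
Qed.

Lemma CP_unit_neq0 {u : X -> R} : CP_unit P u -> forall x, u x != 0.
Proof.
move=> [_ [v [_ uv]]] x; apply/eqP => ux0.
by move: (uv x); rewrite ux0 mul0r => /eqP; rewrite eq_sym oner_eq0.
Qed.

Lemma CP_idempotent_clopen {e : X -> R} :
  CP_idempotent P e -> @tauP_clopen X R P (ZP e).
Proof.
move=> [Pe ee]; exists e, (fun x => 1 - e x); split => //.
  exact: CP_sub (CP_cst 1) Pe.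
apply/seteqP; split => x; rewrite /ZP /=.
  by move=> ->; rewrite subr0 => /eqP; rewrite oner_eq0.
by case: (idempotent_01 (ee x)) => // -> []; rewrite subrr.
Qed.

Lemma tauP_clopen_indic {U : set X} :
  @tauP_clopen X R P U -> CP P (\1_(~` U) : X -> R).
Proof.
move=> [g1 [g2 [Pg1 Pg2 U1 U2]]]; apply: (CP_discont_sub Pg1 Pg2) => x ex.
apply: contrapT => /not_orP[/contrapT c1 /contrapT c2]; apply: ex.
apply: indic_continuous_nbhs; have [Ux|nUx] := pselect (U x).
- right; rewrite setCK U2; apply: nbhs_nonzero c2 _.
  by apply/eqP; move: Ux; rewrite U2.
- left; rewrite U1; apply: nbhs_nonzero c1 _.
  by apply/eqP; rewrite U1 in nUx.
Qed.

End DiscontinuityIdeal.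

Theorem theorem3p4 (R : realType) (X : topologicalType) (P : set (set X))
  (hT1 : accessible_space X) (hP : closed_ideal P) (f : X -> R) (hf : CP P f) :
  CP_clean P f <->
  exists U : set X, @tauP_clopen X R P U /\ f @^-1` [set 1] `<=` U /\ U `<=` ~` ZP f.
Proof.
split=> [[u [e [hu he fE]]] | [U [hU [f1U UZ]]]].
- have u0 := CP_unit_neq0 hu.
  exists (ZP e); split; first exact: (CP_idempotent_clopen hP he).
  split=> x; rewrite /ZP /= fE.
  + case: (idempotent_01 (he.2 x)) => // -> /eqP.
    by rewrite -subr_eq0 addrK (negbTE (u0 x)).
  + by move=> ->; rewrite addr0; apply/eqP.
- pose e : X -> R := \1_(~` U).
  have Pe : CP P e := tauP_clopen_indic hP hU.
  have u0 x : f x - e x != 0.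
    rewrite /e indicE; have [Ux|nUx] := pselect (U x).
      by rewrite memNset ?subr0; [apply/eqP; exact: UZ|].
    by rewrite mem_set // subr_eq0; apply/eqP => /f1U.
  have Pu : CP P (fun x => f x - e x) := CP_sub hP hf Pe.
  exists (fun x => f x - e x), e; split; last by move=> x; rewrite subrK.
  + split=> //; exists (fun x => (f x - e x)^-1).
    by split; [exact (CP_inv hP u0 Pu) | move=> x; rewrite mulfV].
  + split=> // x; rewrite /e indicE.
    by case: (x \in ~` U); rewrite /= ?mulr0 ?mulr1.
Qed.
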